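(* Let $G=\varinjlim(\mathbb Z^{n+1},A^{(n)})$ be the inductive limit (the $K_0$-group of the GICAR algebra), where $A^{(n)}:\mathbb Z^{n+1}\to\mathbb Z^{n+2}$ is given by $(A^{(n)}v)_i=v_{i-1}+v_i$ (with $v_0=v_{n+2}=0$), with positive cone $G^+$ the union of the images of $\mathbb Z_{\ge0}^{n+1}$ and order unit $u$ the image of $(\binom n0,\binom n1,\dots,\binom nn)\in\mathbb Z^{n+1}$ (for any $n$). Let $\mathbb Z^{(\infty)}$ be the group of integer sequences $(\beta_1,\beta_2,\dots)$ that are eventually $0$, with $\mathbb Z^{n+1}$ identified with the sequences supported in the first $n+1$ coordinates. Define $\Phi_n:\mathbb Z^{n+1}\to\mathbb Z^{(\infty)}$ by $\Phi_n(v)=A_nv$. Then: (a) $\Phi_{n+1}\circ A^{(n)}=\Phi_n$ for all $n\ge1$, and the induced map $G\to\mathbb Z^{(\infty)}$ is a group isomorphism; (b) it maps $u$ to $e_1=(1,0,0,\dots)$; (c) it maps $G^+$ onto $\bigcup_{n\ge1}P_n^+$, where $P_n^+$ is the set of $\beta\in\mathbb Z^{(\infty)}$ supported in the first $n+1$ coordinates such that $\sum_{l=0}^{k}\binom{n-l}{k-l}\beta_{l+1}\ge0$ for all $0\le k\le n$.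
   Context: For $k\ge0$, $A_{k,k+1}\in M_{k+2}(\mathbb Z)$ is the lower bidiagonal matrix with all diagonal entries $1$, all subdiagonal entries $(i+1,i)$ equal to $1$, and all other entries $0$; for $n\ge1$, $A_n=[A_{0,1}^{-1}\oplus I_{n-1}][A_{1,2}^{-1}\oplus I_{n-2}]\cdots[A_{n-2,n-1}^{-1}\oplus I_1]A_{n-1,n}^{-1}\in M_{n+1}(\mathbb Z)$, where $I_m$ is the $m\times m$ identity and $\oplus$ is block-diagonal sum. (In the paper $\mathbb Z^{(\infty)}$ appears as $C(X_{min},\mathbb Z)$, with $\beta$ corresponding to $\sum_r\beta_r\chi_{B(r,r-1)\cap X_{min}}$.) *)

From HB Require Import structures.
From mathcomp Require Import all_boot all_order all_algebra.
Set Implicit Arguments. Unset Strict Implicit. Unset Printing Implicit Defensive.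
Import Order.TTheory GRing.Theory Num.Theory.
Local Open Scope ring_scope.

(* Indexing convention: all vectors and sequences are 0-indexed, so the
   coordinate v_i (1-indexed in the paper) is [v (i-1)].  *)

Definition Aup (n : nat) : 'M[int]_(n.+2, n.+1) :=
  \matrix_(i, j) ((nat_of_ord i == nat_of_ord j) || (nat_of_ord i == (nat_of_ord j).+1))%:R.

Definition Akk (k : nat) : 'M[int]_(k.+2) :=
  \matrix_(i, j) ((nat_of_ord i == nat_of_ord j) || (nat_of_ord i == (nat_of_ord j).+1))%:R.

(* A_{k,k+1}^{-1} (+) I_{N-1-k}, an (N+1)x(N+1) matrix (block diagonal sum,
   written out entrywise). Used for k <= N-2. *)
Definition Dblk (N k : nat) : 'M[int]_(N.+1) :=
  \matrix_(i, j)
    if (nat_of_ord i < k.+2)%N && (nat_of_ord j < k.+2)%N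
    then (invmx (Akk k)) (inord i) (inord j)
    else (nat_of_ord i == nat_of_ord j)%:R.

(* A_n for n >= 1 (n = m+1):
   A_{m+1} = [A_{0,1}^{-1} (+) I] ... [A_{m-1,m}^{-1} (+) I] A_{m,m+1}^{-1}.
   For n = 0 (not used by the paper) we put the identity. *)
Definition An (n : nat) : 'M[int]_(n.+1) :=
  match n return 'M[int]_(n.+1) with
  | 0 => 1%:M
  | m.+1 => (\prod_(k < m) Dblk m.+1 k) *m invmx (Akk m)
  end.

Definition emb (n : nat) (v : 'cV[int]_(n.+1)) : nat -> int :=
  fun i => if (i < n.+1)%N then v (inord i) 0 else 0.

Definition finsupp (b : nat -> int) : Prop :=
  exists N, forall i, (N <= i)%N -> b i = 0.

Definition Phi (n : nat) (v : 'cV[int]_(n.+1)) : nat -> int := emb (An n *m v).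

Fixpoint lift_by (d : nat) : forall n, 'cV[int]_(n.+1) -> 'cV[int]_((d + n).+1) :=
  match d return forall n, 'cV[int]_(n.+1) -> 'cV[int]_((d + n).+1) with
  | 0 => fun n v => v
  | d'.+1 => fun n v => Aup (d' + n) *m lift_by d' v
  end.

(* Equality in G of the classes of (n,v) and (m,w). *)
Definition limeq (n : nat) (v : 'cV[int]_(n.+1)) (m : nat) (w : 'cV[int]_(m.+1)) : Prop :=
  exists d e, (d + n = e + m)%N /\ emb (lift_by d v) =1 emb (lift_by e w).

(* The induced map G -> Z^(oo) on the class of (n,v), computed at level n+1 >= 1. *)
Definition Philim (n : nat) (v : 'cV[int]_(n.+1)) : nat -> int := Phi (Aup n *m v).

Definition ubin (n : nat) : 'cV[int]_(n.+1) := \col_i ('C(n, i))%:Z.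

Definition e1 : nat -> int := fun i => if i == 0%N then 1 else 0.

Definition nonnegv (n : nat) (v : 'cV[int]_(n.+1)) : Prop := forall i, 0 <= v i 0.

(* P_n^+ (0-indexed: b l = beta_{l+1}). *)
Definition Pplus (n : nat) (b : nat -> int) : Prop :=
  (forall i, (n.+1 <= i)%N -> b i = 0) /\
  (forall k, (k <= n)%N -> 0 <= \sum_(l < k.+1) ('C(n - l, k - l))%:Z * b l).

From HB Require Import structures.
From mathcomp Require Import all_boot all_order all_algebra.
From mathcomp Require Import zify.
Import Order.TTheory GRing.Theory Num.Theory.
Local Open Scope ring_scope.
Set Implicit Arguments. Unset Strict Implicit. Unset Printing Implicit Defensive.

(* Let P : Z^{n+1} -> Z^{n+2} be the zero-padding ([padmx]).  Then
   A^{(n)} = A_{n,n+1} P, and peeling the last factor off A_{n+1} gives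
   A_{n+1} A^{(n)} = P A_n, which is the compatibility of the Phi_n.  The
   inverse of A_n over Z is the lower triangular Pascal-type matrix
   [binmx n] with entries C(n-l, k-l); this makes the induced map bijective,
   and since row k of [binmx n] is the k-th inequality defining P_n^+, a
   column beta lies in P_n^+ iff [binmx n] beta >= 0. *)

Lemma sum_indicator (R : nzRingType) N (f : 'I_N.+1 -> R) (i : nat) :
  \sum_(l < N.+1) (i == l)%:R * f l = if (i < N.+1)%N then f (inord i) else 0.
Proof.
case: ifP => hi.
  rewrite (bigD1 (inord i)) //= big1 => [|l hl].
    by rewrite inordK // eqxx mul1r addr0.
  case: eqP => [il|]; last by rewrite mul0r.
  by move: hl; rewrite -val_eqE /= inordK // il eqxx.
apply: big1 => l _; case: eqP => [il|]; last by rewrite mul0r.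
by move: hi; rewrite il ltn_ord.
Qed.

Definition padmx (N : nat) : 'M[int]_(N.+2, N.+1) :=
  \matrix_(i, j) (nat_of_ord i == nat_of_ord j)%:R.

Definition elast (N : nat) : 'cV[int]_(N.+1) := delta_mx ord_max 0.

Definition binsub (n k l : nat) : nat := if (l <= k)%N then 'C(n - l, k - l) else 0.

Definition binmx (n : nat) : 'M[int]_(n.+1) := \matrix_(k, l) (binsub n k l)%:Z.

Lemma mulmx_padmx N m (A : 'M[int]_(m, N.+2)) i j :
  (A *m padmx N) i j = A i (widen_ord (leqnSn _) j).
Proof.
rewrite mxE; under eq_bigr do rewrite mxE mulrC eq_sym.
rewrite sum_indicator (leqW (ltn_ord j)); congr (A i _).
by apply: val_inj; rewrite /= inordK // leqW.
Qed.

Lemma padmx_mul N m (A : 'M[int]_(N.+1, m)) (i : 'I_N.+2) j :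
  (padmx N *m A) i j = if (i < N.+1)%N then A (inord i) j else 0.
Proof. by rewrite mxE; under eq_bigr do rewrite mxE; rewrite sum_indicator. Qed.

Lemma mulmx_AupE N m (A : 'M[int]_(N.+1, m)) (i : 'I_N.+2) j :
  (Aup N *m A) i j =
  (if (i < N.+1)%N then A (inord i) j else 0) + (if (0 < i)%N then A (inord i.-1) j else 0).
Proof.
rewrite mxE; under eq_bigr do rewrite mxE.
case: i => [[|i] hi] /=.
  rewrite addr0 (eq_bigr (fun l : 'I_N.+1 => (0%N == l)%:R * A l j)) ?sum_indicator //.
  by move=> l _; rewrite orbF.
rewrite (eq_bigr (fun l : 'I_N.+1 => (i.+1 == l)%:R * A l j + (i == l)%:R * A l j)).
  by rewrite big_split /= !sum_indicator; have -> : (i < N.+1)%N by lia.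
have ind_or (a b : bool) : ~~ (a && b) -> ((a || b)%:R : int) = a%:R + b%:R by case: a; case: b.
move=> l _; rewrite eqSS -mulrDl ind_or //; apply/negP => /andP[/eqP il /eqP il']; lia.
Qed.

Lemma Aup_padmx N : Aup N = Akk N *m padmx N.
Proof. by apply/matrixP => i j; rewrite mulmx_padmx !mxE. Qed.

Lemma Akk_unitmx N : Akk N \in unitmx.
Proof.
rewrite unitmxE det_trig.
  by rewrite big1 ?unitr1 // => i _; rewrite mxE eqxx.
apply/forallP => i; apply/forallP => j; apply/implyP => ij; rewrite mxE.
case: (nat_of_ord i =P nat_of_ord j) => [e|_]; first by move: ij; rewrite e ltnn.
by case: (nat_of_ord i =P (nat_of_ord j).+1) => [e|_] //; move: ij; lia.
Qed.

Lemma Dblk_padmx N k : (k < N)%N -> Dblk N.+1 k *m padmx N = padmx N *m Dblk N k.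
Proof.
move=> kN; apply/matrixP => i j; rewrite mulmx_padmx padmx_mul !mxE /=.
case: (ltnP i N.+1) => hi; first by rewrite inordK.
have -> : nat_of_ord i = N.+1 by move: (ltn_ord i) hi; lia.
have -> : (N.+1 < k.+2)%N = false by lia.
by case: eqP => // e; move: (ltn_ord j); rewrite -e ltnn.
Qed.

Lemma prod_Dblk_padmx N K : (K <= N)%N ->
  (\prod_(k < K) Dblk N.+1 k) *m padmx N = padmx N *m \prod_(k < K) Dblk N k.
Proof.
elim: K => [|K IH] KN; first by rewrite !big_ord0 mul1mx mulmx1.
rewrite !big_ord_recr /= -!mulmxE -mulmxA Dblk_padmx // mulmxA IH ?mulmxA //.
exact: ltnW.
Qed.

Lemma An_prod m : An m.+1 = \prod_(k < m.+1) Dblk m.+1 k.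
Proof.
rewrite big_ord_recr /= -mulmxE; congr (_ *m _).
by apply/matrixP => i j; rewrite !mxE !ltn_ord /= !inord_val.
Qed.

Lemma An_Aup m : An m.+2 *m Aup m.+1 = padmx m.+1 *m An m.+1.
Proof.
rewrite [in RHS]An_prod /= Aup_padmx mulmxA -(mulmxA _ (invmx _)) mulVmx ?Akk_unitmx // mulmx1.
exact: prod_Dblk_padmx.
Qed.

Lemma Akk_elast N : Akk N *m elast N.+1 = elast N.+1.
Proof.
rewrite /elast -colE; apply/matrixP => i j; rewrite !mxE ord1 eqxx andbT /=.
case: (nat_of_ord i =P N.+1) => e.
  by have -> : i == ord_max by apply/eqP/val_inj.
have -> : (i == ord_max) = false by apply/negP => /eqP ei; apply: e; rewrite ei.
by case: (nat_of_ord i =P N.+2) => // e2; move: (ltn_ord i); lia.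
Qed.

Lemma Dblk_elast N k : (k.+1 < N)%N -> Dblk N k *m elast N = elast N.
Proof.
move=> kN; rewrite /elast -colE; apply/matrixP => i j; rewrite !mxE ord1 /=.
by rewrite ifF ?andbF ?andbT //; lia.
Qed.

Lemma prod_Dblk_elast N K : (K < N)%N -> (\prod_(k < K) Dblk N k) *m elast N = elast N.
Proof.
elim: K => [|K IH] KN; first by rewrite big_ord0 mul1mx.
by rewrite big_ord_recr /= -mulmxE -mulmxA Dblk_elast ?IH //; lia.
Qed.

Lemma An_elast m : An m.+1 *m elast m.+1 = elast m.+1.
Proof.
have invAkk : invmx (Akk m) *m elast m.+1 = elast m.+1.
  by rewrite -{1}Akk_elast mulmxA mulVmx ?Akk_unitmx // mul1mx.
by rewrite /= -mulmxA invAkk prod_Dblk_elast.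
Qed.

Lemma binsubSS n k l : (l <= n)%N -> binsub n.+1 k.+1 l = binsub n k.+1 l + binsub n k l.
Proof.
rewrite /binsub => ln; case: (ltnP k.+1 l) => [kl|lk].
  by rewrite !ifF //; lia.
case: (eqVneq l k.+1) => [->|nlk]; first by rewrite ltnn !subnn !bin0.
have -> : (n.+1 - l = (n - l).+1)%N by lia.
have -> : (k.+1 - l = (k - l).+1)%N by lia.
by rewrite ifT ?binS //; lia.
Qed.

Lemma binsub0 n l : binsub n.+1 0 l = binsub n 0 l.
Proof. by rewrite /binsub; case: l => [|l] /=; rewrite ?bin0. Qed.

Lemma binsub_small n k l : (l <= n < k)%N -> binsub n k l = 0%N.
Proof. by case/andP=> ln nk; rewrite /binsub; case: ifP => // lk; rewrite bin_small //; lia. Qed.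

Lemma binmx_padmx N : binmx N.+1 *m padmx N = Aup N *m binmx N.
Proof.
apply/matrixP => i j; rewrite mulmx_padmx mulmx_AupE !mxE /=.
case: i => [[|k] hk] /=; first by rewrite inordK // binsub0 addr0.
have jN : (j <= N)%N by rewrite -ltnS.
rewrite binsubSS // PoszD (@inordK N k) //; congr (_ + _).
case: ltnP => kN; first by rewrite inordK.
by rewrite binsub_small // jN.
Qed.

Lemma binmx_elast N : binmx N *m elast N = elast N.
Proof.
rewrite /elast -colE; apply/matrixP => i j; rewrite !mxE ord1 eqxx andbT /binsub /=.
case: (eqVneq i ord_max) => [->|ne] /=; first by rewrite leqnn subnn bin0.
have : nat_of_ord i != N by apply: contra ne => /eqP e; apply/eqP/val_inj.
by move=> iN; rewrite ifF //; move: (ltn_ord i) iN; lia.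
Qed.

Lemma padmx_elast_eq1 N (X : 'M[int]_(N.+2)) :
  X *m padmx N = padmx N -> X *m elast N.+1 = elast N.+1 -> X = 1%:M.
Proof.
move=> Xpad Xlast; apply/matrixP => i j.
case: (ltnP j N.+1) => hj.
  have := congr1 (fun M : 'M[int]_(N.+2, N.+1) => M i (Ordinal hj)) Xpad.
  rewrite mulmx_padmx !mxE /=.
  by have -> : widen_ord (leqnSn N.+1) (Ordinal hj) = j by apply: val_inj.
have -> : j = ord_max by apply: val_inj => /=; move: (ltn_ord j); lia.
have := congr1 (fun M : 'cV[int]_(N.+2) => M i 0) Xlast.
by rewrite /elast -colE !mxE /= eqxx andbT.
Qed.

(* Inductively, An m.+2 *m binmx m.+2 fixes the image of P (by binmx_padmx
   and An_Aup) and the last basis vector, which together span Z^{m+3}. *)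
Lemma An_binmx m : An m.+1 *m binmx m.+1 = 1%:M.
Proof.
elim: m => [|m IH].
  have -> : binmx 1 = Akk 0.
    by apply/matrixP => i j; rewrite !mxE; case: i => [[|[|i]] hi]; case: j => [[|[|j]] hj].
  by rewrite /= big_ord0 mul1mx mulVmx ?Akk_unitmx.
apply: padmx_elast_eq1.
  by rewrite -mulmxA binmx_padmx mulmxA An_Aup -mulmxA IH mulmx1.
by rewrite -mulmxA binmx_elast An_elast.
Qed.

Lemma binmx_AnK m n : cancel (@mulmx _ _ _ n (An m.+1)) (mulmx (binmx m.+1)).
Proof. by move=> x; rewrite mulmxA (mulmx1C (An_binmx m)) mul1mx. Qed.

Lemma emb_padmx N (x : 'cV[int]_(N.+1)) : emb (padmx N *m x) =1 emb x.
Proof.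
move=> i; rewrite /emb; case: ifP => hi; first by rewrite padmx_mul inordK.
by rewrite ifF //; move: hi; lia.
Qed.

Lemma emb_inj N (x y : 'cV[int]_(N.+1)) : emb x =1 emb y -> x = y.
Proof.
move=> xy; apply/matrixP => i j; rewrite ord1; have := xy i.
by rewrite /emb ltn_ord !inord_val.
Qed.

Lemma embD N (x y : 'cV[int]_(N.+1)) i : emb (x + y) i = emb x i + emb y i.
Proof. by rewrite /emb; case: ifP => _; rewrite ?mxE ?addr0. Qed.

Lemma emb_col N (b : nat -> int) : (forall i, (N.+1 <= i)%N -> b i = 0) ->
  emb (\col_(i < N.+1) b i) =1 b.
Proof.
move=> bN i; rewrite /emb; case: ifP => hi; first by rewrite mxE inordK.
by rewrite bN //; lia.
Qed.

Lemma Phi_Aup m (v : 'cV[int]_(m.+2)) : Phi (Aup m.+1 *m v) =1 Phi v.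
Proof. by move=> i; rewrite /Phi mulmxA An_Aup -mulmxA emb_padmx. Qed.

Lemma Philim_Phi m (v : 'cV[int]_(m.+2)) : Philim v =1 Phi v.
Proof. exact: Phi_Aup. Qed.

Lemma Philim_lift_by d n (v : 'cV[int]_(n.+1)) : Philim (lift_by d v) =1 Philim v.
Proof. by elim: d => [|d IH] //= i; rewrite -IH [LHS]Phi_Aup. Qed.

Lemma Aup_inj N : injective (fun x : 'cV[int]_(N.+1) => Aup N *m x).
Proof.
move=> x y /(congr1 (mulmx (invmx (Akk N)))); rewrite Aup_padmx -!mulmxA.
rewrite !mulKmx ?Akk_unitmx // => pxy.
by apply: emb_inj => i; rewrite -emb_padmx pxy emb_padmx.
Qed.

Lemma Philim_inj N (x y : 'cV[int]_(N.+1)) : Philim x =1 Philim y -> x = y.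
Proof.
by move=> /emb_inj /(congr1 (mulmx (binmx N.+1))); rewrite !binmx_AnK => /Aup_inj.
Qed.

Lemma Philim_eq_level N M (x : 'cV[int]_(N.+1)) (y : 'cV[int]_(M.+1)) :
  N = M -> emb x =1 emb y <-> Philim x =1 Philim y.
Proof. by move=> NM; case: M / NM y => y; split=> [/emb_inj | /Philim_inj] ->. Qed.

Lemma Philim_binmx N (b : nat -> int) : (forall i, (N.+2 <= i)%N -> b i = 0) ->
  Philim (binmx N.+1 *m \col_(i < N.+2) b i) =1 b.
Proof. by move=> bN i; rewrite Philim_Phi /Phi mulmxA An_binmx mul1mx emb_col. Qed.

Lemma nonnegv_Aup n (v : 'cV[int]_(n.+1)) : nonnegv v -> nonnegv (Aup n *m v).
Proof.
move=> v_ge0 i; rewrite mxE; apply: sumr_ge0 => l _.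
by rewrite mxE; apply: mulr_ge0 => //; apply: v_ge0.
Qed.

Lemma Pplus_emb n (x : 'cV[int]_(n.+1)) (b : nat -> int) :
  emb x =1 b -> Pplus n b <-> nonnegv (binmx n *m x).
Proof.
move=> xb; have coord k : (k <= n)%N ->
    \sum_(l < k.+1) ('C(n - l, k - l))%:Z * b l = (binmx n *m x) (inord k) 0.
  move=> kn; rewrite (big_ord_widen n.+1 (fun l => ('C(n - l, k - l))%:Z * b l)) //.
  rewrite big_mkcond mxE; apply: eq_bigr => l _; rewrite !mxE inordK // /binsub ltnS -xb.
  by case: ifP => _; rewrite ?mul0r // /emb ltn_ord inord_val.
split=> [[_ ge0] i | ge0]; first by rewrite -(inord_val i) -coord ?ge0 // -ltnS.
split=> [i ni | k kn]; first by rewrite -xb /emb ifF //; lia.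
by rewrite coord.
Qed.

Lemma Philim_ubin n : Philim (ubin n) =1 e1.
Proof.
have ubinE k : ubin k = binmx k *m delta_mx 0 0.
  by rewrite -colE; apply/colP => i; rewrite !mxE /binsub /= !subn0.
have pad0 : padmx n *m delta_mx 0 0 = delta_mx 0 0 :> 'cV[int]_(n.+2).
  apply/colP => i; rewrite padmx_mul !mxE -!val_eqE /=.
  by case: ifP => hi; [rewrite inordK | case: eqP => // i0; rewrite i0 in hi].
move=> i; rewrite /Philim /Phi ubinE [Aup n *m _]mulmxA -binmx_padmx -mulmxA pad0.
rewrite mulmxA An_binmx mul1mx.
rewrite /emb /e1; case: ifP => hi; last by case: eqP => // i0; move: hi; rewrite i0.
by rewrite mxE -val_eqE /= inordK // andbT; case: (i == 0%N).
Qed.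

Theorem mainTheorem11 :
  (forall n, (1 <= n)%N -> forall v : 'cV[int]_(n.+1), Phi (Aup n *m v) =1 Phi v)
  /\ (forall n (v : 'cV[int]_(n.+1)) m (w : 'cV[int]_(m.+1)),
        limeq v w -> Philim v =1 Philim w)
  /\ (forall n (v w : 'cV[int]_(n.+1)),
        Philim (v + w) =1 (fun i => Philim v i + Philim w i))
  /\ (forall n (v : 'cV[int]_(n.+1)), finsupp (Philim v))
  /\ (forall n (v : 'cV[int]_(n.+1)) m (w : 'cV[int]_(m.+1)),
        Philim v =1 Philim w -> limeq v w)
  /\ (forall b : nat -> int, finsupp b ->
        exists n (v : 'cV[int]_(n.+1)), Philim v =1 b)
  /\ (forall n, Philim (ubin n) =1 e1)
  /\ (forall b : nat -> int,
        (exists n (v : 'cV[int]_(n.+1)), nonnegv v /\ Philim v =1 b)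
        <-> (exists n, (1 <= n)%N /\ Pplus n b)).
Proof.
split; first by case=> [//|m] _; exact: Phi_Aup.
split.
  move=> n v m w [d [e [de vw]]] i.
  by have := (Philim_eq_level _ _ de).1 vw i; rewrite !Philim_lift_by.
split; first by move=> n v w i; rewrite /Philim /Phi !mulmxDr embD.
split; first by move=> n v; exists n.+2 => i ni; rewrite /Philim /Phi /emb ifF //; lia.
split.
  move=> n v m w vw; exists m, n; split; first exact: addnC.
  by apply/(Philim_eq_level _ _ (addnC m n)) => i; rewrite !Philim_lift_by.
split.
  move=> b [N bN]; exists N.+1, (binmx N.+1 *m \col_(i < N.+2) b i).
  by apply: Philim_binmx => i iN; apply: bN; lia.
split; first exact: Philim_ubin.
move=> b; split=> [[n [v [v_ge0 vb]]] | [n [n_gt0 b_pos]]].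
  by exists n.+1; split=> //; apply/(Pplus_emb vb); rewrite binmx_AnK; apply: nonnegv_Aup.
case: n n_gt0 b_pos => [//|N] _ b_pos; have bN := b_pos.1.
exists N.+1, (binmx N.+1 *m \col_(i < N.+2) b i).
by split; [exact/(Pplus_emb (emb_col bN)) | exact: Philim_binmx].
Qed.
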